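(* Let $G=(V,E)$ be a finite connected undirected graph with base node $0$ and let $T=(V,E_T)$ be a shortest-path tree rooted at $0$. Any conveyor deployment that achieves full-conveyor coverage on $T$ requires at least $2(|V|-1)$ conveyor robots.
   Context: Time is slotted; each edge traversal takes one slot; robots start at $0$ and each slot move to an adjacent node or stay. $V_{\mathrm{s}}:=V\setminus\{0\}$; $d_i$ is the hop distance from $i$ to $0$. A shortest-path tree $T=(V,E_T)$ rooted at $0$ is a spanning tree of $G$ in which each node's depth equals $d_i$; $p(i)$ is the parent of $i\in V_{\mathrm{s}}$. Conveyor robots carry data samples; at each non-base node $i$, static sensing robots generate samples at completion times $g_i^{(n)}$ of successive sensing attempts. A conveyor deployment (a deterministic specification of conveyor trajectories) achieves full-conveyor coverage on $T$ if: (1) for every $i\in V_{\mathrm{s}}$ and every slot $t$, some conveyor is at $i$ at time $t$ and moves from $i$ to $p(i)$ between $t$ and $t+1$; (2) whenever a sensing attempt at node $i$ completes at time $g_i^{(n)}$, the new sample is immediately transferred (by gossip) to a baseward conveyor co-located at $i$, which then carries it along the $T$-path from $i$ to $0$ one hop per slot without handing it off or waiting, until delivered at the base; (3) every conveyor moves along $T$ at unit speed and never waits, i.e., traverses exactly one edge of $T$ in every slot. *)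

From mathcomp Require Import all_boot.
Set Implicit Arguments.
Unset Strict Implicit.
Unset Printing Implicit Defensive.

Definition simple_graph (V : finType) (e : rel V) : Prop :=
  symmetric e /\ irreflexive e.

Definition connected_graph (V : finType) (e : rel V) : Prop :=
  forall x y : V, exists s : seq V, path e x s && (last x s == y).

Definition walk_len (V : finType) (e : rel V) (i b : V) (n : nat) : Prop :=
  exists s : seq V, [/\ size s = n, path e i s & last i s = b].

Definition hop_dist (V : finType) (e : rel V) (b i : V) (n : nat) : Prop :=
  walk_len e i b n /\ (forall m, walk_len e i b m -> n <= m).

Definition tree_depth (V : finType) (p : V -> V) (b i : V) (n : nat) : Prop :=
  iter n p i = b /\ (forall m, m < n -> iter m p i != b).

(** T = (V, {{i, p i} | i <> b}) is a shortest-path tree of G rooted at b: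
    each tree edge is an edge of G, every node reaches the root via parents
    (so T is a spanning tree), and each node's depth in T equals its hop
    distance d_i in G.  (The value p b is irrelevant.) *)
Definition shortest_path_tree (V : finType) (e : rel V) (b : V) (p : V -> V)
  : Prop :=
  (forall i, i != b -> e i (p i)) /\
  (forall i, exists n, tree_depth p b i n /\ hop_dist e b i n).

Definition tedge (V : finType) (b : V) (p : V -> V) (x y : V) : bool :=
  ((x != b) && (p x == y)) || ((y != b) && (p y == x)).

(** A conveyor deployment: finitely many conveyors k : K, conveyor k enters
    the field at base b at slot [st k] and [pos k t] is its position at slot t
    (meaningful for t >= st k).  Sensing completion times at node i are
    [g i 0 < g i 1 < ...].  Full-conveyor coverage on T (from slot t0 on):
    (1) every non-base node has at every slot a co-located conveyor moving to
        its parent;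
    (2) every sample completed at node i is taken by a co-located conveyor that
        then follows the T-path i, p i, p (p i), ..., b one hop per slot;
    (3) every conveyor traverses one T-edge in every slot after entering. *)
Definition full_conveyor_coverage (V : finType) (b : V) (p : V -> V)
  (g : V -> nat -> nat) (t0 : nat)
  (K : finType) (st : K -> nat) (pos : K -> nat -> V) : Prop :=
  [/\
      (forall k, pos k (st k) = b),
      (forall i t, i != b -> t0 <= t ->
         exists k, [/\ st k <= t, pos k t = i & pos k t.+1 = p i]),
      (forall i n, i != b -> t0 <= g i n ->
         exists k, [/\ st k <= g i n, pos k (g i n) = i &
           forall d, tree_depth p b i d ->
             forall j, j <= d -> pos k (g i n + j) = iter j p i]) &
      (forall k t, st k <= t -> tedge b p (pos k t) (pos k t.+1))].

(** Measure the fleet by the total depth in T of the conveyors already in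
    the field.  In every slot each of them changes depth by exactly one, and by
    coverage (1) at least [|V| - 1] of them (one per non-base node, all at
    distinct positions) move up.  Hence the potential changes by at most
    [#|K| - 2 (|V| - 1)] per slot; as it is a natural number, it cannot decrease
    forever, so [2 (|V| - 1) <= #|K|]. *)

From mathcomp Require Import all_boot zify.

Set Implicit Arguments.
Unset Strict Implicit.
Unset Printing Implicit Defensive.

Lemma nat_potential_leq (phi : nat -> nat) (t0 a c : nat) :
  (forall t, t0 <= t -> phi t.+1 + a <= phi t + c) -> a <= c.
Proof.
move=> step.
have iter_step n : phi (t0 + n) + a * n <= phi t0 + c * n.
  elim: n => [|n IHn]; first by rewrite !muln0 !addn0.
  by have := step (t0 + n) (leq_addr _ _); rewrite addnS; lia.
rewrite leqNgt; apply/negP => lt_ca.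
by have := iter_step (phi t0).+1; nia.
Qed.

Lemma sum_nat_of_bool_card (T : finType) (P : pred T) :
  \sum_(x : T) (P x : nat) = #|P|.
Proof.
rewrite -sum1_card [RHS]big_mkcond.
by apply: eq_bigr => x _; rewrite unfold_in; case: (P x).
Qed.

Section ParentDepth.

Variables (V : finType) (b : V) (p : V -> V).
Hypothesis reaches_root : forall i, exists n, iter n p i == b.

Definition depth (i : V) : nat := ex_minn (reaches_root i).

Lemma iter_depth i : iter (depth i) p i = b.
Proof. by rewrite /depth; case: ex_minnP => n /eqP. Qed.

Lemma depth_min i n : iter n p i = b -> depth i <= n.
Proof. by move=> /eqP iter_n; rewrite /depth; case: ex_minnP => m _; apply. Qed.

Lemma depth_root : depth b = 0.
Proof. by apply/eqP; rewrite -leqn0; apply: depth_min. Qed.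

Lemma depth_parent i : i != b -> depth i = (depth (p i)).+1.
Proof.
move=> ib; case def_d: (depth i) => [|d].
  by move: (iter_depth i); rewrite def_d => /= /eqP; rewrite (negPf ib).
apply/eqP; rewrite eqn_leq; apply/andP; split.
  by rewrite -def_d; apply: depth_min; rewrite iterSr iter_depth.
by rewrite ltnS; apply: depth_min; move: (iter_depth i); rewrite def_d iterSr.
Qed.

Lemma tedge_depth x y :
  tedge b p x y -> depth x = (depth y).+1 \/ depth y = (depth x).+1.
Proof.
case/orP=> /andP[nb /eqP <-]; [left | right]; exact: depth_parent.
Qed.

End ParentDepth.

Section ConveyorPotential.

Variables (V K : finType) (b : V) (lev : V -> nat).
Variables (st : K -> nat) (pos : K -> nat -> V).
Hypothesis lev_base : lev b = 0.
Hypothesis start_at_base : forall k, pos k (st k) = b.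
Hypothesis unit_step : forall k t, st k <= t ->
  lev (pos k t) = (lev (pos k t.+1)).+1 \/ lev (pos k t.+1) = (lev (pos k t)).+1.

(* Before entering, a conveyor counts as level 0, the level of the base where
   it enters, so entering leaves the potential unchanged. *)
Definition conveyor_level k t : nat := if st k <= t then lev (pos k t) else 0.

Definition potential t : nat := \sum_k conveyor_level k t.

Definition ascends k t : bool := (st k <= t) && (lev (pos k t.+1) < lev (pos k t)).

Lemma conveyor_level_step k t :
  conveyor_level k t.+1 + 2 * ascends k t = conveyor_level k t + (st k <= t).
Proof.
rewrite /conveyor_level /ascends; have [started | fresh] := leqP (st k) t.
  rewrite (leqW started) /=.
  by case: (unit_step started) => ->; rewrite ?ltnSn ?ltnNge ?leqnSn /=; lia.
have [entered | //] := leqP (st k) t.+1.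
have <- : st k = t.+1 by apply/eqP; rewrite eqn_leq entered fresh.
by rewrite start_at_base lev_base.
Qed.

Lemma potential_step t :
  potential t.+1 + 2 * #|[pred k | ascends k t]|
  = potential t + #|[pred k | st k <= t]|.
Proof.
rewrite -!sum_nat_of_bool_card /potential big_distrr -!big_split /=.
by apply: eq_bigr => k _; exact: conveyor_level_step.
Qed.

Lemma potential_drop t :
  (forall i, i != b ->
     exists k, [/\ st k <= t, pos k t = i & lev (pos k t.+1) < lev i]) ->
  potential t.+1 + 2 * (#|V| - 1) <= potential t + #|K|.
Proof.
move=> ascending_at.
have ascents : #|V| - 1 <= #|[pred k | ascends k t]|.
  apply: leq_trans (leq_image_card (pos^~ t) [pred k | ascends k t]).
  rewrite subn1 -(cardsC1 b); apply/subset_leq_card/subsetP => i.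
  rewrite !inE => ib; have [k [started <- up]] := ascending_at i ib.
  by apply/imageP; exists k; rewrite // inE /ascends started up.
apply: (@leq_trans (potential t.+1 + 2 * #|[pred k | ascends k t]|)).
  by rewrite leq_add2l leq_mul2l ascents orbT.
by rewrite potential_step leq_add2l max_card.
Qed.

End ConveyorPotential.

Theorem theorem4 (V : finType) (e : rel V) (b : V) (p : V -> V)
  (g : V -> nat -> nat) (t0 : nat)
  (K : finType) (st : K -> nat) (pos : K -> nat -> V) :
  simple_graph e -> connected_graph e -> shortest_path_tree e b p ->
  (forall i, {homo g i : m n / m < n}) ->
  full_conveyor_coverage b p g t0 st pos ->
  2 * (#|V| - 1) <= #|K|.
Proof.
(* Only the tree structure and coverage conditions (1) and (3) are needed. *)
move=> _ _ [_ tree_reach] _ [start_at_base baseward _ tree_moves].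
have reaches_root i : exists n, iter n p i == b.
  by have [n [[/eqP iter_n _] _]] := tree_reach i; exists n.
pose lev := depth reaches_root.
apply: (@nat_potential_leq (potential lev st pos) t0) => t t0t.
apply: potential_drop => [||k s started|i ib].
- exact: depth_root.
- exact: start_at_base.
- exact: tedge_depth (tree_moves k s started).
have [k [started at_i to_parent]] := baseward i t ib t0t.
by exists k; rewrite to_parent /lev (depth_parent _ ib).
Qed.
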